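(* Let $L$ be a finite dimensional simple Lie algebra over $\mathbb{C}$ with Cartan subalgebra $\eta$, root system $\Phi$ and root space decomposition $L=\eta\oplus\bigoplus_{\alpha\in\Phi}L_\alpha$. Let $f:L\times L\to L$ be a biderivation of $L$ and let $\phi,\psi:L\to L$ be linear maps such that $f(x,y)=[\phi(x),y]=[x,\psi(y)]$ for all $x,y\in L$. Then there is a complex number $\lambda$ such that $\phi(x)=\psi(x)=\lambda x$ for all $x\in L_\alpha$ and all $\alpha\in\Phi$.
   Context: A biderivation of a Lie algebra $L$ is a bilinear map $f:L\times L\to L$ such that $f([x,y],z)=[x,f(y,z)]+[f(x,z),y]$ and $f(x,[y,z])=[f(x,y),z]+[y,f(x,z)]$ for all $x,y,z\in L$. Here $L_\alpha=\{x\in L:[h,x]=\alpha(h)x\ \forall h\in\eta\}$. *)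

From HB Require Import structures.
From mathcomp Require Import all_boot all_order all_algebra.
From mathcomp Require Import reals complex.
Set Implicit Arguments. Unset Strict Implicit. Unset Printing Implicit Defensive.
Import Order.TTheory GRing.Theory Num.Theory.
Local Open Scope ring_scope.

Section LieDefs.
Variables (K : fieldType) (L : vectType K).


Definition lie_bracket (br : L -> L -> L) : Prop :=
  [/\ (forall (a : K) x y z, br (a *: x + y) z = a *: br x z + br y z),
      (forall (a : K) x y z, br z (a *: x + y) = a *: br z x + br z y),
      (forall x, br x x = 0) &
      (forall x y z, br x (br y z) + br y (br z x) + br z (br x y) = 0)].

Definition bilinear_map (f : L -> L -> L) : Prop :=
  (forall (a : K) x y z, f (a *: x + y) z = a *: f x z + f y z) /\
  (forall (a : K) x y z, f z (a *: x + y) = a *: f z x + f z y).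

Definition lie_ideal (br : L -> L -> L) (I : {vspace L}) : Prop :=
  forall x y, y \in I -> br x y \in I.

Definition lie_simple (br : L -> L -> L) : Prop :=
  (exists x y, br x y != 0) /\
  (forall I : {vspace L}, lie_ideal br I -> I = 0%VS \/ I = fullv).

Definition lie_subalgebra (br : L -> L -> L) (H : {vspace L}) : Prop :=
  forall x y, x \in H -> y \in H -> br x y \in H.

Definition ad_semisimple (br : L -> L -> L) (h : L) : Prop :=
  exists s : seq L, <<s>>%VS = fullv /\
    (forall v, v \in s -> exists c : K, br h v = c *: v).

Definition toral (br : L -> L -> L) (H : {vspace L}) : Prop :=
  lie_subalgebra br H /\ (forall h, h \in H -> ad_semisimple br h).

(* Cartan subalgebra of a semisimple Lie algebra: a maximal toral subalgebra *)
Definition cartan_subalgebra (br : L -> L -> L) (H : {vspace L}) : Prop :=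
  toral br H /\ (forall H' : {vspace L}, toral br H' -> (H <= H')%VS -> H' = H).

Definition weight_space (br : L -> L -> L) (H : {vspace L}) (alpha : L -> K)
  (x : L) : Prop :=
  forall h, h \in H -> br h x = alpha h *: x.

Definition is_root (br : L -> L -> L) (H : {vspace L}) (alpha : L -> K) : Prop :=
  (exists h, h \in H /\ alpha h != 0) /\
  (exists x, x != 0 /\ weight_space br H alpha x).

Definition biderivation (br : L -> L -> L) (f : L -> L -> L) : Prop :=
  bilinear_map f /\
  (forall x y z, f (br x y) z = br x (f y z) + br (f x z) y) /\
  (forall x y z, f x (br y z) = br (f x y) z + br y (f x z)).

End LieDefs.

From HB Require Import structures.
From mathcomp Require Import all_boot all_order all_algebra.
From mathcomp Require Import reals complex.
From Stdlib Require Import Classical_Prop Classical_Pred_Type ClassicalEpsilon.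
Set Implicit Arguments.
Unset Strict Implicit.
Unset Printing Implicit Defensive.
Import Order.TTheory GRing.Theory Num.Theory.
Local Open Scope ring_scope.

(* Put th = phi + psi and s = phi - psi, so
   that [th x, y] = [x, th y] and [s x, y] = - [x, s y].  For such a
   quasicentral th, (x, y) |-> [th x, y] is a skew-symmetric biderivation,
   hence satisfies Bresar's identity [[th x, y], [u, v]] = [[x, y], [th u, v]];
   as L is perfect and centreless this defines g with g [x, y] = [th x, y].
   The kernel of th - g is an ideal, and th - g cannot be injective, for then
   it would be onto and every ad z would square to zero.  So th commutes with
   every ad x and is a scalar by Schur's lemma.  For skew maps s1, s2 the
   Jordan product s1 s2 + s2 s1 is quasicentral, hence a scalar.  If some
   skew map has a nonzero square, a rescaling is a skew involution s whose
   eigenspaces are abelian subalgebras, and the Jordan scalars of the skew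
   maps s ad x - ad x s force L to be abelian.  Otherwise all skew maps square
   to zero and anticommute, so they have a common kernel vector; the common
   kernel is an ideal, hence all of L. *)

Section AbelianGroupIdentities.
Variable V : zmodType.

Inductive zexpr : Type :=
  ZAtom of nat | ZZero | ZAdd of zexpr & zexpr | ZOpp of zexpr.

Fixpoint zeval (env : seq V) (e : zexpr) : V :=
  match e with
  | ZAtom i => nth 0 env i
  | ZZero => 0
  | ZAdd e1 e2 => zeval env e1 + zeval env e2
  | ZOpp e1 => - zeval env e1
  end.

Fixpoint add_coefs (s t : seq int) : seq int :=
  match s, t with
  | [::], _ => t
  | _, [::] => s
  | x :: s', y :: t' => (x + y) :: add_coefs s' t'
  end.

Fixpoint coefs (e : zexpr) : seq int :=
  match e with
  | ZAtom i => rcons (nseq i 0) 1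
  | ZZero => [::]
  | ZAdd e1 e2 => add_coefs (coefs e1) (coefs e2)
  | ZOpp e1 => map -%R (coefs e1)
  end.

Fixpoint comb (env : seq V) (s : seq int) : V :=
  match s with
  | [::] => 0
  | c :: s' => head 0 env *~ c + comb (behead env) s'
  end.

Lemma comb_add env s t : comb env (add_coefs s t) = comb env s + comb env t.
Proof.
elim: s t env => [|x s IH] [|y t] env /=; rewrite ?addr0 ?add0r //.
by rewrite IH mulrzDr addrACA.
Qed.

Lemma comb_opp env s : comb env (map -%R s) = - comb env s.
Proof.
elim: s env => [|x s IH] env /=; first by rewrite oppr0.
by rewrite IH mulrNz opprD.
Qed.

Lemma comb_atom env i : comb env (rcons (nseq i 0) 1) = nth 0 env i.
Proof.
elim: i env => [|i IH] [|v env] /=; rewrite ?addr0 ?mulr1z ?mulr0z ?add0r //.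
by rewrite IH /= nth_nil.
Qed.

Lemma zeval_coefs env e : zeval env e = comb env (coefs e).
Proof.
elim: e => [i||e1 IH1 e2 IH2|e1 IH1] /=.
- by rewrite comb_atom.
- by [].
- by rewrite comb_add IH1 IH2.
- by rewrite comb_opp IH1.
Qed.

Lemma comb_zero env s : all (eq_op^~ 0) s -> comb env s = 0.
Proof.
elim: s env => [|x s IH] env //= /andP[/eqP -> s0].
by rewrite mulr0z add0r IH.
Qed.

Lemma zeval_eq env e1 e2 :
  all (eq_op^~ 0) (add_coefs (coefs e1) (map -%R (coefs e2))) ->
  zeval env e1 = zeval env e2.
Proof.
move=> H; apply/eqP; rewrite -subr_eq0 !zeval_coefs -comb_opp -comb_add.
by rewrite comb_zero.
Qed.

End AbelianGroupIdentities.

Ltac abel_mem x l :=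
  match l with
  | nil => constr:(false)
  | cons x _ => constr:(true)
  | cons ?y ?l' =>
    match constr:(tt) with
    | _ => let _ := constr:(@Logic.eq_refl _ x : x = y) in constr:(true)
    | _ => abel_mem x l'
    end
  end.

Ltac abel_atoms l e :=
  match e with
  | (?a + ?b)%R => let l1 := abel_atoms l a in abel_atoms l1 b
  | (- ?a)%R => abel_atoms l a
  | 0%R => l
  | _ => match abel_mem e l with true => l | false => constr:(cons e l) end
  end.

Ltac abel_index x l :=
  match l with
  | cons x _ => constr:(O)
  | cons ?y ?l' =>
    match constr:(tt) with
    | _ => let _ := constr:(@Logic.eq_refl _ x : x = y) in constr:(O)
    | _ => let n := abel_index x l' in constr:(S n)
    end
  end.

Ltac abel_reify l e :=
  match e with
  | (?a + ?b)%R =>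
    let r1 := abel_reify l a in let r2 := abel_reify l b in constr:(ZAdd r1 r2)
  | (- ?a)%R => let r := abel_reify l a in constr:(ZOpp r)
  | 0%R => constr:(ZZero)
  | _ => let n := abel_index e l in constr:(ZAtom n)
  end.

Ltac abel :=
  match goal with
  | |- @eq ?T ?x ?y =>
    let l := abel_atoms (@nil T) x in
    let l := abel_atoms l y in
    let r1 := abel_reify l x in
    let r2 := abel_reify l y in
    change (@zeval _ l r1 = @zeval _ l r2);
    apply: zeval_eq; vm_compute; reflexivity
  end.

Lemma eq_by_diff (V : zmodType) (a b c d : V) : a = b -> c - d = a - b -> c = d.
Proof. by move=> -> /eqP; rewrite subrr subr_eq0 => /eqP. Qed.

Lemma natmul_eq0 (R : numFieldType) (V : lmodType R) (v : V) n :
  (v *+ n.+1 == 0) = (v == 0).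
Proof. by rewrite -scaler_nat scaler_eq0 pnatr_eq0. Qed.

Section LinearAlgebra.
Context {K : fieldType} {V : vectType K}.

Lemma linfunE_linear (W : vectType K) (f : V -> W) : linear f -> linfun f =1 f.
Proof.
move=> f_lin.
pose g : {linear V -> W} := HB.pack f (GRing.isLinear.Build K V W *:%R f f_lin).
exact: (lfunE g).
Qed.

Lemma vspace_of_pred (P : V -> Prop) :
  P 0 -> (forall a u v, P u -> P v -> P (a *: u + v)) ->
  exists U : {vspace V}, forall v, v \in U <-> P v.
Proof.
move=> P0 Plin.
suff [U [UP PU]] : exists U : {vspace V}, (forall u, u \in U -> P u) /\
    forall v, P v -> v \in U by exists U => v; split; [apply: UP | apply: PU].
have grow k : exists U : {vspace V}, (forall u, u \in U -> P u) /\
    ((k <= \dim U)%N \/ forall v, P v -> v \in U).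
  elim: k => [|k [U [UP [k_le|PU]]]]; last by exists U; split=> //; right.
    exists 0%VS; split; last by left.
    by move=> u; rewrite memv0 => /eqP ->.
  case: (classic (forall v, P v -> v \in U)) => [PU|].
    by exists U; split=> //; right.
  move=> /(not_all_ex_not _ _)[v vNPv]; have [Pv vNU] := imply_to_and _ _ vNPv.
  exists (U + <[v]>)%VS; split.
    move=> _ /memv_addP[u Uu [_ /vlineP[t ->] ->]].
    by rewrite addrC; apply: Plin => //; apply: UP.
  left; apply: leq_ltn_trans k_le _; rewrite ltnNge; apply/negP => dimUv.
  have /eqP U_eq : U == (U + <[v]>)%VS by rewrite eqEdim addvSl dimUv.
  by apply: vNU; rewrite U_eq (subvP (addvSr _ _)) ?memv_line.
have [U [UP [dim_gt|PU]]] := grow (\dim {:V}).+1; last by exists U.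
by have := dimvS (subvf U); rewrite leqNgt dim_gt.
Qed.

End LinearAlgebra.

Lemma exists_eigenvector (F : numClosedFieldType) (V : vectType F)
    (f : 'End(V)) :
  (0 < \dim {:V})%N -> exists c, exists2 v, v != 0 & f v = c *: v.
Proof.
move=> V_gt0; have eV := vbasisP {:V}.
have [c] := eigenvalue_closed (passmx.mxof (vbasis {:V}) (vbasis {:V}) f) V_gt0.
rewrite /eigenvalue -(passmx.vsof_eq0 eV) -(passmx.leigenspaceE eV) => Ec.
exists c, (vpick (passmx.leigenspace f c)); first by rewrite vpick0.
have := memv_pick (passmx.leigenspace f c).
by rewrite memv_ker add_lfunE opp_lfunE scale_lfunE id_lfunE subr_eq0 => /eqP.
Qed.

Section LieAlgebra.
Variables (F : numClosedFieldType) (L : vectType F) (br : L -> L -> L).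
Hypothesis br_lie : lie_bracket br.
Local Notation "[ x , y ]" := (br x y).

Lemma brPl a x y z : [a *: x + y, z] = a *: [x, z] + [y, z].
Proof. by case: br_lie. Qed.

Lemma brPr a x y z : [z, a *: x + y] = a *: [z, x] + [z, y].
Proof. by case: br_lie. Qed.

Lemma brxx x : [x, x] = 0.
Proof. by case: br_lie. Qed.

Lemma br0l z : [0, z] = 0.
Proof.
have := brPl 1 0 0 z; rewrite !scale1r !addr0 => E.
by apply: (@addrI _ [0, z]); rewrite addr0 -E.
Qed.

Lemma br0r z : [z, 0] = 0.
Proof.
have := brPr 1 0 0 z; rewrite !scale1r !addr0 => E.
by apply: (@addrI _ [z, 0]); rewrite addr0 -E.
Qed.

Lemma brDl x y z : [x + y, z] = [x, z] + [y, z].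
Proof. by have := brPl 1 x y z; rewrite !scale1r. Qed.

Lemma brDr x y z : [z, x + y] = [z, x] + [z, y].
Proof. by have := brPr 1 x y z; rewrite !scale1r. Qed.

Lemma brZl a x z : [a *: x, z] = a *: [x, z].
Proof. by rewrite -[a *: x]addr0 brPl br0l addr0. Qed.

Lemma brZr a x z : [z, a *: x] = a *: [z, x].
Proof. by rewrite -[a *: x]addr0 brPr br0r addr0. Qed.

Lemma brNl x z : [- x, z] = - [x, z].
Proof. by rewrite -scaleN1r brZl scaleN1r. Qed.

Lemma brNr x z : [z, - x] = - [z, x].
Proof. by rewrite -scaleN1r brZr scaleN1r. Qed.

Lemma brBl x y z : [x - y, z] = [x, z] - [y, z].
Proof. by rewrite brDl brNl. Qed.

Lemma brBr x y z : [z, x - y] = [z, x] - [z, y].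
Proof. by rewrite brDr brNr. Qed.

Lemma brMnl x z n : [x *+ n, z] = [x, z] *+ n.
Proof. by elim: n => [|n IH]; rewrite ?br0l // !mulrS brDl IH. Qed.

Lemma brC x y : [y, x] = - [x, y].
Proof.
have /eqP := brxx (x + y); rewrite brDl !brDr !brxx add0r addr0 addr_eq0.
by move=> /eqP ->; rewrite opprK.
Qed.

Lemma jacobi x y z : [x, [y, z]] = [[x, y], z] + [y, [x, z]].
Proof.
have [_ _ _ /(_ x y z)] := br_lie.
rewrite (brC x z) brNr (brC [x, y] z) => J.
by apply/eqP; rewrite -subr_eq0 -J; apply/eqP; abel.
Qed.

Lemma jacobi_l x y z : [[x, y], z] = [x, [y, z]] + [[x, z], y].
Proof. by rewrite jacobi (brC [x, z] y) subrK. Qed.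

Definition ad x : 'End(L) := linfun (br x).

Lemma adE x y : ad x y = [x, y].
Proof. by apply: linfunE_linear => a u v; exact: brPr. Qed.

Definition quasicentral (th : 'End(L)) := forall x y, [th x, y] = [x, th y].

Definition skew_quasicentral (s : 'End(L)) := forall x y, [s x, y] = - [x, s y].

Definition centroidal (th : 'End(L)) := forall x y, th [x, y] = [th x, y].

Section Simple.
Hypothesis br_simple : lie_simple br.

Lemma lie_nonabelian : exists x y, [x, y] != 0.
Proof. by case: br_simple. Qed.

Lemma lie_simple_pred (P : L -> Prop) :
  P 0 -> (forall a u v, P u -> P v -> P (a *: u + v)) ->
  (forall x y, P y -> P [x, y]) ->
  (forall v, P v -> v = 0) \/ (forall v, P v).
Proof.
move=> P0 Plin Pbr; have [U UP] := vspace_of_pred P0 Plin.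
have U_ideal : lie_ideal br U by move=> x y /UP Py; apply/UP/Pbr.
case: br_simple => _ /(_ U U_ideal) [U0|U_full]; [left|right] => v.
  by move=> /UP; rewrite U0 memv0 => /eqP.
by apply/UP; rewrite U_full memvf.
Qed.

Lemma lie_dim_gt0 : (0 < \dim {:L})%N.
Proof.
rewrite lt0n dimv_eq0; apply/negP => /eqP L0.
have [x [y]] := lie_nonabelian.
by have := memvf [x, y]; rewrite L0 memv0 => ->.
Qed.

Lemma center_eq0 z : (forall y, [z, y] = 0) -> z = 0.
Proof.
move=> z_central.
case: (@lie_simple_pred (fun v => forall y, [v, y] = 0)).
- by move=> y; rewrite br0l.
- by move=> a u v u0 v0 y; rewrite brPl u0 v0 scaler0 addr0.
- by move=> x y y0 w; rewrite jacobi_l y0 br0r add0r brC y0 oppr0.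
- by move=> center0; apply: center0.
- move=> all_central; have [x [y]] := lie_nonabelian.
  by rewrite all_central eqxx.
Qed.

Lemma bracket_ind (P : L -> Prop) :
  P 0 -> (forall a u v, P u -> P v -> P (a *: u + v)) ->
  (forall x y, P [x, y]) -> forall v, P v.
Proof.
move=> P0 Plin Pbr.
have [P_only0|//] := lie_simple_pred P0 Plin (fun x y _ => Pbr x y).
have [x [y]] := lie_nonabelian.
by rewrite (P_only0 _ (Pbr x y)) eqxx.
Qed.

Lemma bracket_center_eq0 z : (forall x y, [z, [x, y]] = 0) -> z = 0.
Proof.
move=> z_central; apply: center_eq0; apply: bracket_ind => //.
- exact: br0r.
- by move=> a u v u0 v0; rewrite brPr u0 v0 scaler0 addr0.
Qed.

Lemma ad_square_neq0 : ~ (forall z w, [z, [z, w]] = 0).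
Proof.
move=> ad_sq0.
have anti a b c : [a, [b, c]] = - [b, [a, c]].
  have := ad_sq0 (a + b) c; rewrite !brDl !brDr !ad_sq0 add0r addr0.
  by move/eqP; rewrite addr_eq0 => /eqP.
have all0 a b c : [a, [b, c]] = 0.
  have := jacobi a b c.
  rewrite (brC c [a, b]) (anti c a b) opprK (brC b c) brNr (anti b a c) => J.
  apply/eqP; rewrite -(natmul_eq0 _ 2) !mulrS mulr0n addr0 {1}J.
  by apply/eqP; abel.
have [x [y]] := lie_nonabelian.
by rewrite (bracket_center_eq0 (all0 x)) br0l eqxx.
Qed.

Lemma skew_biderivation_bresar (f : L -> L -> L) :
  biderivation br f -> (forall x y, f y x = - f x y) ->
  forall x y u v, [f x y, [u, v]] = [[x, y], f u v].
Proof.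
move=> [_ [fDl fDr]] f_skew.
pose G x y u v := [f x y, [u, v]] - [[x, y], f u v].
have swap13 x y u v : G x y u v = G u y x v.
  have := fDr [x, u] y v; rewrite fDl => E.
  rewrite !fDl !fDr !brDl !brDr in E.
  rewrite (jacobi x (f u y) v) (jacobi x y (f u v)) in E.
  rewrite (jacobi_l (f x y) v u) (jacobi_l y (f x v) u) in E.
  rewrite (brC u v) brNr (brC u y) brNl in E.
  by rewrite /G; apply/esym/(eq_by_diff E); abel.
have swap12 x y u v : G y x u v = - G x y u v.
  by rewrite /G f_skew brNl (brC x y) brNl opprB; abel.
move=> x y u v; apply/eqP; rewrite -subr_eq0 -/(G x y u v).
have E : G x y u v = - G x y u v.
  by rewrite {1}swap13 swap12 swap13 swap12 opprK swap13 swap12.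
by rewrite -(natmul_eq0 _ 1) mulr2n {1}E addNr.
Qed.

Section Quasicentral.
Variable th : 'End(L).
Hypothesis th_qc : quasicentral th.

Lemma quasicentral_biderivation : biderivation br (fun x y => [th x, y]).
Proof.
split; first by split=> a x y z /=; rewrite ?linearP ?brPl ?brPr.
split=> x y z; last exact: jacobi.
by rewrite th_qc jacobi_l -th_qc -(th_qc x).
Qed.

Lemma quasicentral_bresar x y u v : [[th x, y], [u, v]] = [[x, y], [th u, v]].
Proof.
apply: (skew_biderivation_bresar quasicentral_biderivation).
by move=> {}x {}y /=; rewrite th_qc brC.
Qed.

(* [bresar_rel a b] pins down the value at [a] of the lift [g] with
   [g [x, y] = [th x, y]], without choosing how [a] is written as a sum of
   brackets. *)
Definition bresar_rel a b := forall u v, [b, [u, v]] = [a, [th u, v]].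

Lemma bresar_rel_uniq a b b' : bresar_rel a b -> bresar_rel a b' -> b = b'.
Proof.
move=> ab ab'; apply/eqP; rewrite -subr_eq0; apply/eqP.
by apply: bracket_center_eq0 => u v; rewrite brBl ab ab' subrr.
Qed.

Lemma bresar_rel_total a : exists b, bresar_rel a b.
Proof.
move: a; apply: bracket_ind.
- by exists 0 => u v; rewrite !br0l.
- move=> a a1 a2 [b1 ab1] [b2 ab2]; exists (a *: b1 + b2) => u v.
  by rewrite !brPl ab1 ab2.
- by move=> x y; exists [th x, y] => u v; rewrite quasicentral_bresar.
Qed.

Lemma quasicentral_lift :
  exists g : 'End(L), quasicentral g /\ forall x y, g [x, y] = [th x, y].
Proof.
have [g gP] := ClassicalEpsilon.choice _ bresar_rel_total.
have g_lin : linear g.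
  move=> a u v; apply: (bresar_rel_uniq (gP _)) => u' v'.
  by rewrite !brPl !gP.
have gE := linfunE_linear g_lin.
have g_br x y : g [x, y] = [th x, y].
  by apply: (bresar_rel_uniq (gP _)) => u v; rewrite quasicentral_bresar.
exists (linfun g); split=> [a|x y]; last by rewrite gE g_br.
apply: bracket_ind.
- by rewrite !linear0 !br0r.
- by move=> c u v Hu Hv; rewrite linearP !brPr Hu Hv.
- by move=> u v; rewrite !gE gP g_br.
Qed.

End Quasicentral.

Lemma quasicentral_cyclic_eq0 (tau : 'End(L)) : quasicentral tau ->
  (forall x y z, [tau [x, y], z] = - [x, tau [y, z]]) -> tau = 0.
Proof.
move=> tau_qc tau_cyc.
have comm_tau z : [z, tau z] = 0.
  by apply/eqP; rewrite -(natmul_eq0 _ 1) mulr2n {1}(brC (tau z)) -tau_qc addNr.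
have comm_br_tau x z : [[x, z], tau z] = 0.
  by rewrite -tau_qc tau_cyc brxx linear0 br0r oppr0.
have ad_sq_tau z w : [z, [z, tau w]] = 0.
  rewrite -tau_qc jacobi comm_tau br0l add0r brC (brC w z) brNl.
  by rewrite comm_br_tau oppr0 oppr0.
case: (@lie_simple_pred (fun v => tau v = 0)).
- exact: linear0.
- by move=> a u v u0 v0; rewrite linearP /= u0 v0 scaler0 addr0.
- move=> x y y0; rewrite (brC y x) linearN; apply/eqP; rewrite oppr_eq0.
  apply/eqP/center_eq0 => z.
  by rewrite tau_cyc -tau_qc y0 br0l oppr0.
- move=> tau_inj; exfalso; apply: ad_square_neq0 => z w.
  have ker0 : lker tau == 0%VS.
    apply/eqP/vspaceP => v; rewrite memv_ker memv0.
    by apply/eqP/eqP => [/tau_inj|->]; rewrite ?linear0.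
  have : w \in limg tau by rewrite lker0_limgf // memvf.
  by case/memv_imgP => w' _ ->; rewrite ad_sq_tau.
- by move=> tau0; apply/lfunP => v; rewrite tau0 lfunE.
Qed.

Lemma quasicentral_centroidal th : quasicentral th -> centroidal th.
Proof.
move=> th_qc; have [g [g_qc g_br]] := quasicentral_lift th_qc.
pose tau := th - g.
have tauE v : tau v = th v - g v by rewrite add_lfunE opp_lfunE.
have tau_qc : quasicentral tau.
  by move=> x y; rewrite !tauE brBl brBr th_qc g_qc.
have tau_cyc x y z : [tau [x, y], z] = - [x, tau [y, z]].
  rewrite !tauE !g_br brBl brBr th_qc (jacobi_l x y) (jacobi_l (th x) y z).
  by rewrite -(th_qc y) -(th_qc x z) (th_qc x [y, z]); abel.
have tau0 := quasicentral_cyclic_eq0 tau_qc tau_cyc.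
by move=> x y; apply/eqP; rewrite -subr_eq0 -g_br -tauE tau0 zero_lfunE.
Qed.

Lemma centroidal_scalar th : centroidal th -> exists c, forall v, th v = c *: v.
Proof.
move=> th_cent; have [c [v v_neq0 thv]] := exists_eigenvector th lie_dim_gt0.
exists c; case: (@lie_simple_pred (fun w => th w = c *: w)).
- by rewrite linear0 scaler0.
- by move=> a u w Hu Hw; rewrite linearP /= Hu Hw scalerDr !scalerA mulrC.
- move=> x y Hy; have -> : [x, y] = - [y, x] by rewrite brC.
  by rewrite linearN /= th_cent Hy brZl scalerN.
- by move=> only0; move: v_neq0; rewrite (only0 _ thv) eqxx.
- by [].
Qed.

Lemma quasicentral_scalar th :
  quasicentral th -> exists c, forall v, th v = c *: v.
Proof. by move=> /quasicentral_centroidal; apply: centroidal_scalar. Qed.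

Lemma skew_jordan_quasicentral s1 s2 :
  skew_quasicentral s1 -> skew_quasicentral s2 ->
  quasicentral ((s1 \o s2)%VF + (s2 \o s1)%VF).
Proof.
move=> s1_sk s2_sk x y; rewrite !add_lfunE !comp_lfunE brDl brDr.
by rewrite s1_sk s2_sk s2_sk s1_sk !opprK addrC.
Qed.

Lemma skew_jordan_scalar s1 s2 :
  skew_quasicentral s1 -> skew_quasicentral s2 ->
  exists c, forall v, s1 (s2 v) + s2 (s1 v) = c *: v.
Proof.
move=> s1_sk s2_sk.
have [c cE] := quasicentral_scalar (skew_jordan_quasicentral s1_sk s2_sk).
by exists c => v; rewrite -cE add_lfunE !comp_lfunE.
Qed.

Lemma skew_square_scalar s :
  skew_quasicentral s -> exists c, forall v, s (s v) = c *: v.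
Proof.
move=> s_sk; have [c cE] := skew_jordan_scalar s_sk s_sk.
exists (c / 2%:R) => v; apply/(@scalerI _ _ 2%:R); first by rewrite pnatr_eq0.
by rewrite scalerA mulrC divfK ?pnatr_eq0 // -cE scaler_nat mulr2n.
Qed.

Definition comm_ad s x : 'End(L) := (s \o ad x)%VF - (ad x \o s)%VF.

Lemma comm_adE s x y : comm_ad s x y = s [x, y] - [x, s y].
Proof. by rewrite add_lfunE opp_lfunE !comp_lfunE !adE. Qed.

Lemma skew_comm_ad x s : skew_quasicentral s -> skew_quasicentral (comm_ad s x).
Proof.
move=> s_sk y z; rewrite !comm_adE brBl brBr.
have E := s_sk [x, z] y.
rewrite (s_sk [x, y] z) (jacobi_l x y (s z)) (jacobi_l x (s y) z).
rewrite (s_sk y z) brNr.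
rewrite (brC (s [x, z]) y) (brC [x, s z] y).
by apply: (eq_by_diff (esym E)); abel.
Qed.

Lemma skew_add s1 s2 : skew_quasicentral s1 -> skew_quasicentral s2 ->
  skew_quasicentral (s1 + s2).
Proof.
by move=> s1_sk s2_sk x y; rewrite !add_lfunE brDl brDr s1_sk s2_sk opprD.
Qed.

Section SquareZero.
Hypothesis skew_sq0 : forall t v, skew_quasicentral t -> t (t v) = 0.

Lemma skew_anticomm t1 t2 v : skew_quasicentral t1 -> skew_quasicentral t2 ->
  t1 (t2 v) = - t2 (t1 v).
Proof.
move=> t1_sk t2_sk; have := skew_sq0 v (skew_add t1_sk t2_sk).
rewrite !add_lfunE !linearD /= (skew_sq0 _ t1_sk) (skew_sq0 _ t2_sk).
rewrite add0r addr0.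
by move/eqP; rewrite addr_eq0 => /eqP.
Qed.

Lemma skew_common_kernel (W : {vspace L}) : W != 0%VS ->
  (forall t w, skew_quasicentral t -> w \in W -> t w \in W) ->
  exists2 v, v \in W & v != 0 /\ forall t, skew_quasicentral t -> t v = 0.
Proof.
elim: {W}(\dim W).+1 {-2}W (ltnSn (\dim W)) => // k IH W dimW W_neq0 W_stable.
case: (classic (forall t w, skew_quasicentral t -> w \in W -> t w = 0)).
  move=> W_killed; exists (vpick W); first exact: memv_pick.
  split=> [|t t_sk]; first by rewrite vpick0.
  by apply: W_killed => //; apply: memv_pick.
move=> /(not_all_ex_not _ _)[t /(not_all_ex_not _ _)[w tw_neq0]].
have [t_sk Wtw] := imply_to_and _ _ tw_neq0.
have [Ww tw0] := imply_to_and _ _ Wtw.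
have tW_sub : (t @: W <= W)%VS.
  by apply/subvP => _ /memv_imgP[u Wu ->]; apply: W_stable.
have [v tWv [v_neq0 v_ker]] : exists2 v, v \in (t @: W)%VS &
    v != 0 /\ forall t, skew_quasicentral t -> t v = 0.
  apply: IH.
  - rewrite -ltnS; apply: leq_trans dimW; rewrite ltnS ltnNge.
    apply/negP => dim_le.
    have /eqP tW_eq : (t @: W)%VS == W by rewrite eqEdim tW_sub.
    apply: tw0; move: Ww; rewrite -tW_eq => /memv_imgP[u _ ->].
    exact: skew_sq0.
  - apply/eqP => tW0; apply: tw0; apply/eqP.
    by rewrite -memv0 -tW0 memv_img.
  - move=> t' _ t'_sk /memv_imgP[u Wu ->].
    by rewrite skew_anticomm // -linearN memv_img // memvN W_stable.
by exists v => //; apply: (subvP tW_sub).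
Qed.

Lemma skew_eq0_of_square0 s : skew_quasicentral s -> s = 0.
Proof.
move=> s_sk; apply/lfunP => v; rewrite zero_lfunE; move: v s s_sk.
case: (@lie_simple_pred (fun v => forall t, skew_quasicentral t -> t v = 0)).
- by move=> t _; rewrite linear0.
- by move=> a u w Hu Hw t t_sk; rewrite linearP /= Hu // Hw // scaler0 addr0.
- move=> x y Hy t t_sk; have := Hy _ (skew_comm_ad x t_sk).
  by rewrite comm_adE Hy // br0r subr0.
- move=> only0; exfalso.
  have L_neq0 : fullv != 0%VS :> {vspace L}.
    by rewrite -dimv_eq0 -lt0n lie_dim_gt0.
  have [v _ [v_neq0 v_ker]] :=
    skew_common_kernel L_neq0 (fun t w _ _ => memvf (t w)).
  by move: v_neq0; rewrite (only0 _ v_ker) eqxx.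
- by move=> killed v t t_sk; apply: killed.
Qed.

End SquareZero.

Lemma lie_not_span2 (a b : L) :
  ~ (forall v, exists t1 t2 : F, v = t1 *: a + t2 *: b).
Proof.
move=> span2.
have line v : exists t : F, v = t *: [a, b].
  move: v; apply: bracket_ind => /=.
  - by exists 0; rewrite scale0r.
  - move=> c u v [t1 ->] [t2 ->]; exists (c * t1 + t2).
    by rewrite scalerDl scalerA.
  move=> x y; have [t1 [t2 ->]] := span2 x; have [t3 [t4 ->]] := span2 y.
  exists (t1 * t4 - t2 * t3).
  rewrite !brDl !brDr !brZl !brZr !brxx !scaler0 add0r addr0 (brC a b).
  by rewrite !scalerN !scalerA scalerBl.
have [x [y]] := lie_nonabelian.
have [t1 ->] := line x; have [t2 ->] := line y.
by rewrite brZl brZr brxx !scaler0 eqxx.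
Qed.

Section SkewInvolution.
Variable sg : 'End(L).
Hypothesis sg_skew : skew_quasicentral sg.
Hypothesis sg_inv : forall v, sg (sg v) = v.

Definition sg_plus : 'End(L) := \1%VF + sg.
Definition sg_minus : 'End(L) := \1%VF - sg.

Lemma sg_plusE w : sg_plus w = w + sg w.
Proof. by rewrite add_lfunE id_lfunE. Qed.

Lemma sg_minusE w : sg_minus w = w - sg w.
Proof. by rewrite add_lfunE opp_lfunE id_lfunE. Qed.

Lemma sg_plus_even w : sg (sg_plus w) = sg_plus w.
Proof. by rewrite sg_plusE linearD /= sg_inv addrC. Qed.

Lemma sg_minus_odd w : sg (sg_minus w) = - sg_minus w.
Proof. by rewrite sg_minusE linearB /= sg_inv opprB. Qed.

Lemma sg_plus_minus w : sg_plus w + sg_minus w = w *+ 2.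
Proof. by rewrite sg_plusE sg_minusE mulr2n; abel. Qed.

Lemma even_br a a' : sg a = a -> sg a' = a' -> [a, a'] = 0.
Proof.
move=> a_even a'_even; have := sg_skew a a'; rewrite a_even a'_even => E.
by apply/eqP; rewrite -(natmul_eq0 _ 1) mulr2n {1}E addNr.
Qed.

Lemma odd_br b b' : sg b = - b -> sg b' = - b' -> [b, b'] = 0.
Proof.
move=> b_odd b'_odd; have := sg_skew b b'; rewrite b_odd b'_odd brNl brNr opprK.
by move=> E; apply/eqP; rewrite -(natmul_eq0 _ 1) mulr2n -{1}E addNr.
Qed.

Lemma br_decomp x y :
  [x, y] *+ 4 = [sg_plus x, sg_minus y] + [sg_minus x, sg_plus y].
Proof.
have := congr2 br (sg_plus_minus x) (sg_plus_minus y).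
rewrite !brDl !brDr (even_br (sg_plus_even x) (sg_plus_even y)).
rewrite (odd_br (sg_minus_odd x) (sg_minus_odd y)) add0r addr0 => ->.
by rewrite !mulrS mulr0n addr0; abel.
Qed.

Lemma even_br_minus a w : sg a = a -> [a, sg_minus w] = [a, w] *+ 2.
Proof.
move=> a_even; have -> : sg_minus w = w *+ 2 - sg_plus w.
  by rewrite -sg_plus_minus addrAC subrr add0r.
by rewrite brBr (even_br a_even (sg_plus_even w)) subr0 !mulr2n brDr.
Qed.

Lemma odd_br_plus b w : sg b = - b -> [b, sg_plus w] = [b, w] *+ 2.
Proof.
move=> b_odd; have -> : sg_plus w = w *+ 2 - sg_minus w.
  by rewrite -sg_plus_minus addrK.
by rewrite brBr (odd_br b_odd (sg_minus_odd w)) subr0 !mulr2n brDr.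
Qed.

Lemma comm_ad_even_even a a' : sg a = a -> sg a' = a' -> comm_ad sg a a' = 0.
Proof.
move=> a_even a'_even.
by rewrite comm_adE a'_even (even_br a_even a'_even) linear0 subrr.
Qed.

Lemma comm_ad_odd_odd b b' : sg b = - b -> sg b' = - b' -> comm_ad sg b b' = 0.
Proof.
move=> b_odd b'_odd.
by rewrite comm_adE b'_odd brNr (odd_br b_odd b'_odd) linear0 oppr0 subrr.
Qed.

Lemma comm_ad_even_odd a b : sg b = - b -> comm_ad sg a b = sg_plus [a, b].
Proof. by move=> b_odd; rewrite comm_adE b_odd brNr opprK sg_plusE addrC. Qed.

Lemma comm_ad_odd_even b a : sg a = a -> comm_ad sg b a = - sg_minus [b, a].
Proof. by move=> a_even; rewrite comm_adE a_even sg_minusE opprB. Qed.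

Lemma jordan_even_odd a b : sg a = a -> sg b = - b -> exists c,
  (forall a', sg a' = a' -> - (sg_plus [a, [b, a']] *+ 2) = c *: a') /\
  (forall b', sg b' = - b' -> - (sg_minus [b, [a, b']] *+ 2) = c *: b').
Proof.
move=> a_even b_odd.
have [c cE] :=
  skew_jordan_scalar (skew_comm_ad a sg_skew) (skew_comm_ad b sg_skew).
exists c; split=> [a' a'_even|b' b'_odd]; rewrite -cE.
  rewrite (comm_ad_even_even a_even a'_even) linear0 addr0.
  rewrite (comm_ad_odd_even b a'_even) linearN /=.
  rewrite comm_ad_even_odd ?sg_minus_odd //.
  by rewrite even_br_minus // (raddfMn sg_plus).
rewrite (comm_ad_odd_odd b_odd b'_odd) linear0 add0r.
rewrite (comm_ad_even_odd a b'_odd) comm_ad_odd_even ?sg_plus_even //.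
by rewrite odd_br_plus // (raddfMn sg_minus).
Qed.

Lemma even_jacobi a a' b :
  sg a = a -> sg a' = a' -> [a, [b, a']] = [a', [b, a]].
Proof.
move=> a_even a'_even; rewrite jacobi (even_br a_even a'_even) br0r addr0.
by rewrite (brC a' [a, b]) (brC b a) brNr opprK.
Qed.

Lemma odd_jacobi b b' a :
  sg b = - b -> sg b' = - b' -> [b, [a, b']] = [b', [a, b]].
Proof.
move=> b_odd b'_odd; rewrite jacobi (odd_br b_odd b'_odd) br0r addr0.
by rewrite (brC b' [b, a]) (brC a b) brNr opprK.
Qed.

Lemma even_odd_span a b c : sg a = a -> sg b = - b -> c != 0 ->
  (forall a', sg a' = a' -> - (sg_plus [a, [b, a']] *+ 2) = c *: a') ->
  (forall b', sg b' = - b' -> - (sg_minus [b, [a, b']] *+ 2) = c *: b') ->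
  forall v, exists t1 t2 : F, v = t1 *: a + t2 *: b.
Proof.
move=> a_even b_odd c_neq0 cA cB.
have even_line a' : sg a' = a' -> exists t : F, a' = t *: a.
  move=> a'_even; have [c' [c'A _]] := jordan_even_odd a'_even b_odd.
  exists (c' / c); rewrite -[a'](scalerK c_neq0) -cA // even_jacobi // c'A //.
  by rewrite scalerA mulrC.
have odd_line b' : sg b' = - b' -> exists t : F, b' = t *: b.
  move=> b'_odd; have [c' [_ c'B]] := jordan_even_odd a_even b'_odd.
  exists (c' / c); rewrite -[b'](scalerK c_neq0) -cB // odd_jacobi // c'B //.
  by rewrite scalerA mulrC.
move=> v; have [t1 E1] := even_line _ (sg_plus_even v).
have [t2 E2] := odd_line _ (sg_minus_odd v).
exists (t1 / 2%:R), (t2 / 2%:R).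
have two_neq0 : 2%:R != 0 :> F by rewrite pnatr_eq0.
rewrite -[v](scalerK two_neq0) scaler_nat -sg_plus_minus E1 E2.
by rewrite scalerDr !scalerA ![_^-1 * _]mulrC.
Qed.

Lemma even_odd_br_br0 a b : sg a = a -> sg b = - b ->
  (forall a', sg a' = a' -> sg_plus [a, [b, a']] = 0) /\
  (forall b', sg b' = - b' -> sg_minus [b, [a, b']] = 0).
Proof.
move=> a_even b_odd; have [c [cA cB]] := jordan_even_odd a_even b_odd.
have [c0|c_neq0] := eqVneq c 0.
  split=> [a' /cA|b' /cB]; rewrite c0 scale0r => /eqP.
    by rewrite oppr_eq0 natmul_eq0 => /eqP.
  by rewrite oppr_eq0 natmul_eq0 => /eqP.
by have := lie_not_span2 (even_odd_span a_even b_odd c_neq0 cA cB).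
Qed.

Lemma sg_plus_br_even a' z : sg a' = a' -> sg_plus [z, a'] = 0.
Proof.
move=> a'_even; move: z; apply: bracket_ind.
- by rewrite br0l linear0.
- by move=> c u v Hu Hv; rewrite brPl linearP /= Hu Hv scaler0 addr0.
move=> x y; have [zero_y _] := even_odd_br_br0 a'_even (sg_minus_odd y).
have [zero_x _] := even_odd_br_br0 a'_even (sg_minus_odd x).
apply/eqP; rewrite -(natmul_eq0 _ 3) -(raddfMn sg_plus) -brMnl.
rewrite br_decomp brDl (brC a' [sg_plus x, _]) (brC a' [sg_minus x, _]).
rewrite (brC (sg_minus y) (sg_plus x)) brNr opprK (raddfB sg_plus) /=.
by rewrite zero_y ?sg_plus_even // zero_x ?sg_plus_even // subr0.
Qed.

Lemma sg_minus_br_odd b' z : sg b' = - b' -> sg_minus [z, b'] = 0.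
Proof.
move=> b'_odd; move: z; apply: bracket_ind.
- by rewrite br0l linear0.
- by move=> c u v Hu Hv; rewrite brPl linearP /= Hu Hv scaler0 addr0.
move=> x y; have [_ zero_x] := even_odd_br_br0 (sg_plus_even x) b'_odd.
have [_ zero_y] := even_odd_br_br0 (sg_plus_even y) b'_odd.
apply/eqP; rewrite -(natmul_eq0 _ 3) -(raddfMn sg_minus) -brMnl.
rewrite br_decomp brDl (brC b' [sg_plus x, _]) (brC b' [sg_minus x, _]).
rewrite (brC (sg_plus y) (sg_minus x)) brNr opprK (raddfD sg_minus) /=.
rewrite (raddfN sg_minus) /= zero_x ?sg_minus_odd //.
by rewrite zero_y ?sg_minus_odd // oppr0 addr0.
Qed.

Lemma skew_involution_false : False.
Proof.
have even_odd_br0 a b : sg a = a -> sg b = - b -> [a, b] = 0.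
  move=> a_even b_odd; apply/eqP; rewrite -(natmul_eq0 _ 1) -sg_plus_minus.
  rewrite (sg_minus_br_odd _ b_odd) addr0 (brC b a) (raddfN sg_plus) /=.
  by rewrite (sg_plus_br_even _ a_even) oppr0.
have [x [y]] := lie_nonabelian; apply/negP; rewrite negbK.
rewrite -(natmul_eq0 _ 3) br_decomp (brC (sg_plus y) (sg_minus x)).
by rewrite !even_odd_br0 ?sg_plus_even ?sg_minus_odd // oppr0 addr0.
Qed.

End SkewInvolution.

Lemma skew_quasicentral_eq0 s : skew_quasicentral s -> s = 0.
Proof.
move=> s_sk.
case: (classic (forall t v, skew_quasicentral t -> t (t v) = 0)) => [sq0|].
  exact: skew_eq0_of_square0.
move=> /(not_all_ex_not _ _)[t /(not_all_ex_not _ _)[v tv]]; exfalso.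
have [t_sk ttv_neq0] := imply_to_and _ _ tv.
have [c cE] := skew_square_scalar t_sk.
have c_neq0 : c != 0 by apply/eqP => c0; apply: ttv_neq0; rewrite cE c0 scale0r.
(* Rescaling [t] by [1 / sqrt c] gives a skew involution. *)
pose r := sqrtC c.
have r2 : r * r = c by rewrite -expr2 sqrtCK.
have r_neq0 : r != 0 by apply: contraNneq c_neq0 => r0; rewrite -r2 r0 mul0r.
apply: (@skew_involution_false (r^-1 *: t)).
- by move=> x y; rewrite !scale_lfunE brZl brZr t_sk scalerN.
- move=> w; rewrite !scale_lfunE linearZ /= cE !scalerA -r2.
  by rewrite mulrACA mulVf // mulr1 scale1r.
Qed.

Lemma quasicentral_pair_scalar (phi psi : 'End(L)) :
  (forall x y, [phi x, y] = [x, psi y]) ->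
  exists c, forall x, phi x = c *: x /\ psi x = c *: x.
Proof.
move=> phi_psi.
have psi_phi x y : [psi x, y] = [x, phi y] by rewrite brC -phi_psi brC opprK.
have [c cE] : exists c, forall v, (phi + psi) v = c *: v.
  apply: quasicentral_scalar => x y.
  by rewrite !add_lfunE brDl brDr phi_psi psi_phi addrC.
have /lfunP diff0 : phi - psi = 0.
  apply: skew_quasicentral_eq0 => x y.
  by rewrite !add_lfunE !opp_lfunE brBl brBr phi_psi psi_phi opprB.
have phi_psiE v : phi v = psi v.
  by apply/eqP; rewrite -subr_eq0 -opp_lfunE -add_lfunE diff0 zero_lfunE.
exists (c / 2%:R) => x.
suff phiE : phi x = (c / 2%:R) *: x by rewrite -phi_psiE.
have two_neq0 : 2%:R != 0 :> F by rewrite pnatr_eq0.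
have phi2 : phi x *+ 2 = c *: x by rewrite mulr2n {2}phi_psiE -add_lfunE cE.
by rewrite -[phi x](scalerK two_neq0) scaler_nat phi2 scalerA mulrC.
Qed.

End Simple.
End LieAlgebra.

Theorem lemma2p3 (R : realType) (L : vectType R[i]) (br : L -> L -> L)
  (eta : {vspace L}) (f : L -> L -> L) (phi psi : 'End(L)) :
  lie_bracket br -> lie_simple br -> cartan_subalgebra br eta ->
  biderivation br f ->
  (forall x y, f x y = br (phi x) y) ->
  (forall x y, f x y = br x (psi y)) ->
  exists lambda : R[i], forall (alpha : L -> R[i]), is_root br eta alpha ->
    forall x, weight_space br eta alpha x ->
      phi x = lambda *: x /\ psi x = lambda *: x.
Proof.
move=> br_lie br_simple _ _ f_phi f_psi.
have phi_psi x y : br (phi x) y = br x (psi y) by rewrite -f_phi f_psi.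
have [c cE] := quasicentral_pair_scalar br_lie br_simple phi_psi.
by exists c => alpha _ x _; apply: cE.
Qed.
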